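(* Let $\lambda$ be an infinite cardinal, let $\mathbb T$ be the unit circle group with its usual topology, and let $\tau_B$ be the topology on the Brandt semigroup $B_\lambda(\mathbb T)$ defined as follows: for a non-zero point $(\alpha,x,\beta)$ a base of neighbourhoods is $\{(\alpha,U,\beta):U$ a neighbourhood of $x$ in $\mathbb T\}$, where $(\alpha,U,\beta)=\{(\alpha,u,\beta):u\in U\}$; a base of neighbourhoods of $0$ consists of the sets $B_\lambda(\mathbb T)\setminus\big(\mathbb T_{\alpha_1,\beta_1}\cup\dots\cup\mathbb T_{\alpha_n,\beta_n}\cup\{(\alpha,x_j,\beta):\alpha,\beta\in\lambda,\ j=1,\dots,k\}\big)$ with $n,k\in\mathbb N$, $\alpha_1,\beta_1,\dots,\alpha_n,\beta_n\in\lambda$, $x_1,\dots,x_k\in\mathbb T$, where $\mathbb T_{\alpha,\beta}=\{(\alpha,x,\beta):x\in\mathbb T\}$. Then the space $(B_\lambda(\mathbb T),\tau_B)$ is countably pracompact if and only if $\lambda\le\mathfrak c$.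
   Context: For a group $G$ and cardinal $\lambda$, $B_\lambda(G)=(\lambda\times G\times\lambda)\cup\{0\}$ with $(\alpha,a,\beta)(\gamma,b,\delta)=(\alpha,ab,\delta)$ if $\beta=\gamma$ and $0$ otherwise. A space $X$ is countably pracompact if there is a dense set $A\subseteq X$ such that every infinite subset of $A$ has an accumulation point in $X$. $\mathfrak c$ is the cardinality of the continuum. *)

From Stdlib Require Import Reals List.
Open Scope R_scope.

Definition finite_set {X : Type} (S : X -> Prop) : Prop :=
  exists l : list X, forall x, S x -> In x l.

Definition dense {X : Type} (is_open : (X -> Prop) -> Prop) (A : X -> Prop) : Prop :=
  forall O, is_open O -> (exists p, O p) -> exists a, A a /\ O a.

Definition accumulation_point {X : Type} (is_open : (X -> Prop) -> Prop)
  (S : X -> Prop) (p : X) : Prop :=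
  forall O, is_open O -> O p -> exists q, S q /\ q <> p /\ O q.

Definition countably_pracompact {X : Type} (is_open : (X -> Prop) -> Prop) : Prop :=
  exists A : X -> Prop, dense is_open A /\
    forall S : X -> Prop, (forall x, S x -> A x) -> ~ finite_set S ->
      exists p, accumulation_point is_open S p.

Definition circle : Type := {p : R * R | fst p * fst p + snd p * snd p = 1}.

Definition cdist (x y : circle) : R :=
  let (p, _) := x in let (q, _) := y in
  sqrt ((fst p - fst q) * (fst p - fst q) + (snd p - snd q) * (snd p - snd q)).

Definition nbhd_T (x : circle) (U : circle -> Prop) : Prop :=
  exists eps, 0 < eps /\ forall u, cdist x u < eps -> U u.

(* Carrier of the Brandt semigroup B_lambda(T) = (L x T x L) u {0},
   where the index set lambda is represented by a type L. *)
Inductive Brandt (L : Type) : Type :=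
| Bzero : Brandt L
| Btrip : L -> circle -> L -> Brandt L.
Arguments Bzero {L}.
Arguments Btrip {L} _ _ _.

(* Semigroup operation (not used in the topology, recorded for context). *)
Definition circle_mul (x y : circle) : R * R :=
  let (p, _) := x in let (q, _) := y in
  (fst p * fst q - snd p * snd q, fst p * snd q + snd p * fst q).

Definition tauB_open {L : Type} (O : Brandt L -> Prop) : Prop :=
  forall p, O p ->
    match p with
    | Btrip a x b =>
        exists U, nbhd_T x U /\ forall u, U u -> O (Btrip a u b)
    | Bzero =>
        exists (ab : list (L * L)) (xs : list circle),
          forall a x b, ~ In (a, b) ab -> ~ In x xs -> O (Btrip a x b)
    end.

Definition infinite_type (L : Type) : Prop := ~ finite_set (fun _ : L => True).
Definition card_le_continuum (L : Type) : Prop :=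
  exists f : L -> R, forall a b, f a = f b -> a = b.

(* (<=) Given an injection f : lambda -> R, we build for every pair (a,b) a
   countable dense subset D_ab of T, pairwise disjoint for distinct pairs.  On
   the real line D_ab is the coset Z[1/3] + psi(a,b), transported to T by the
   inverse stereographic projection; psi(a,b) is the ternary number with digits
   in {0,1} recording the comparisons of f a and f b with all rationals, each
   comparison repeated infinitely often, so every tail of the digit sequence
   (hence every Z[1/3]-coset) determines (a,b).  The union A of the copies
   (a, D_ab, b) is dense, and an infinite S inside A either meets some copy
   T_ab infinitely (then, T being compact, S has an accumulation point there)
   or meets every copy and every level {(a,x,b)} finitely (by disjointness),
   and then 0 is an accumulation point.
   (=>) A dense A contains a diagonal point (a, g a, a) for each a; an infinite
   set of diagonal points on one level is closed and discrete, so g has finite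
   fibres, and T x N, hence lambda, injects into R. *)

From Coquelicot Require Import Coquelicot.
From Stdlib Require Import Reals List Psatz Lra Lia ZArith.
From Stdlib Require Import Classical ClassicalEpsilon ProofIrrelevance FinFun Cantor FunctionalExtensionality.
Open Scope R_scope.

Lemma circle_eq (x y : circle) : proj1_sig x = proj1_sig y -> x = y.
Proof.
  destruct x as [p hp], y as [q hq]; simpl; intros ->.
  f_equal; apply proof_irrelevance.
Qed.

Lemma sum_squares_zero a b : a * a + b * b = 0 -> a = 0 /\ b = 0.
Proof. intro h. split; nra. Qed.

Lemma one_plus_sq_pos t : 0 < 1 + t * t.
Proof. nra. Qed.

(* Inverse stereographic projection from the south pole: a bijection between R
   and T minus the south pole, used to transfer arguments on R to T. *)
Definition stereo_pt (t : R) : R * R := ((1 - t * t) / (1 + t * t), 2 * t / (1 + t * t)).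

Lemma stereo_pt_on_circle t :
  fst (stereo_pt t) * fst (stereo_pt t) + snd (stereo_pt t) * snd (stereo_pt t) = 1.
Proof. unfold stereo_pt; simpl. pose proof (one_plus_sq_pos t). field. lra. Qed.

Definition stereo (t : R) : circle := exist _ (stereo_pt t) (stereo_pt_on_circle t).

Lemma south_on_circle : fst (-1, 0) * fst (-1, 0) + snd (-1, 0) * snd (-1, 0) = 1.
Proof. simpl; lra. Qed.

Definition south : circle := exist _ (-1, 0) south_on_circle.

Definition stereo_coord (c : circle) : R := snd (proj1_sig c) / (1 + fst (proj1_sig c)).

Lemma stereo_coord_stereo t : stereo_coord (stereo t) = t.
Proof. unfold stereo_coord, stereo, stereo_pt; simpl. pose proof (one_plus_sq_pos t). field. split; nra. Qed.

Lemma stereo_injective s t : stereo s = stereo t -> s = t.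
Proof. intro E. rewrite <- (stereo_coord_stereo s), <- (stereo_coord_stereo t), E. reflexivity. Qed.

Lemma south_unique c : fst (proj1_sig c) = -1 -> c = south.
Proof.
  destruct c as [[x y] h]; simpl in *; intros ->. apply circle_eq; simpl.
  assert (y = 0) by nra. subst; reflexivity.
Qed.

Lemma stereo_ne_south t : stereo t <> south.
Proof.
  intro E. apply (f_equal (fun c => fst (proj1_sig c))) in E. simpl in E.
  pose proof (one_plus_sq_pos t).
  apply (f_equal (fun z => z * (1 + t * t))) in E. field_simplify in E; lra.
Qed.

Lemma stereo_surjective c : c <> south -> c = stereo (stereo_coord c).
Proof.
  intro Hc. assert (Hx : fst (proj1_sig c) <> -1) by (intro E; apply Hc, south_unique, E).
  apply circle_eq. destruct c as [[x y] h]; simpl in *. unfold stereo_coord, stereo_pt; simpl.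
  assert (1 + x <> 0) by lra.
  assert (E : 1 + y / (1 + x) * (y / (1 + x)) = 2 / (1 + x)).
  { replace (1 + y / (1 + x) * (y / (1 + x))) with (((1 + x) * (1 + x) + y * y) / ((1 + x) * (1 + x)))
      by (field; auto).
    replace (y * y) with (1 - x * x) by lra. field. auto. }
  rewrite E. replace (1 - y / (1 + x) * (y / (1 + x))) with (2 - 2 / (1 + x)) by lra.
  f_equal; field; auto.
Qed.

(* [stereo] is 2-Lipschitz, so it carries dense sets of R to dense subsets of T. *)
Lemma cdist_stereo s t : cdist (stereo s) (stereo t) <= 2 * Rabs (s - t).
Proof.
  unfold cdist, stereo, stereo_pt; simpl. pose proof (one_plus_sq_pos s); pose proof (one_plus_sq_pos t).
  set (I := _ + _).
  assert (EI : I = 4 * ((s - t) * (s - t)) / ((1 + s * s) * (1 + t * t))) by (unfold I; field; lra).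
  clearbody I.
  assert (I <= (2 * (s - t)) * (2 * (s - t))).
  { rewrite EI. apply Rle_trans with (4 * ((s - t) * (s - t)) / 1); [|lra].
    unfold Rdiv. apply Rmult_le_compat_l.
    - pose proof (Rle_0_sqr (s - t)); unfold Rsqr in *; lra.
    - apply Rinv_le_contravar; nra. }
  replace (2 * Rabs (s - t)) with (Rabs (2 * (s - t))) by (rewrite Rabs_mult, Rabs_right; lra).
  rewrite <- sqrt_Rsqr_abs. apply sqrt_le_1_alt. unfold Rsqr. lra.
Qed.

Lemma cdist_south_stereo t eps : 0 < eps -> 2 / eps < Rabs t -> cdist south (stereo t) < eps.
Proof.
  intros He Ht. unfold cdist, stereo, stereo_pt, south; simpl. pose proof (one_plus_sq_pos t).
  set (I := _ + _).
  assert (EI : I = 4 / (1 + t * t)) by (unfold I; field; lra).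
  assert (0 <= I) by (rewrite EI; apply Rlt_le, Rdiv_lt_0_compat; lra). clearbody I.
  assert (Ht2 : 2 < eps * Rabs t).
  { apply (Rmult_lt_compat_l eps) in Ht; auto. replace (eps * (2 / eps)) with 2 in Ht by (field; lra). lra. }
  assert (Rabs t * Rabs t = t * t) by (rewrite <- Rabs_mult; apply Rabs_right; nra).
  assert (I < eps * eps).
  { rewrite EI. apply (Rmult_lt_reg_r (1 + t * t)); auto.
    unfold Rdiv. rewrite Rmult_assoc, Rinv_l by lra. nra. }
  rewrite <- (sqrt_square eps) by lra. apply sqrt_lt_1_alt. split; auto.
Qed.

Lemma cdist_pos x y : x <> y -> 0 < cdist x y.
Proof.
  intro H. destruct x as [[a b] hp], y as [[c d] hq]; unfold cdist.
  apply sqrt_lt_R0.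
  assert (Hnn : 0 <= (a - c) * (a - c) + (b - d) * (b - d))
    by (pose proof (Rle_0_sqr (a - c)); pose proof (Rle_0_sqr (b - d)); unfold Rsqr in *; lra).
  destruct (Rle_lt_or_eq_dec _ _ Hnn) as [h|h]; [exact h|].
  exfalso; apply H. symmetry in h. apply sum_squares_zero in h. apply circle_eq; simpl. f_equal; lra.
Qed.

Lemma finite_subset {T} (X Y : T -> Prop) : (forall x, X x -> Y x) -> finite_set Y -> finite_set X.
Proof. intros H [l Hl]. exists l; auto. Qed.

Lemma infinite_avoids_list {T} (X : T -> Prop) : ~ finite_set X -> forall l, exists y, X y /\ ~ In y l.
Proof.
  intros H l. apply NNPP; intro N. apply H. exists l. intros x Hx.
  apply NNPP; intro N2. apply N. eauto.
Qed.

Lemma finite_union {T} (X Y : T -> Prop) :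
  finite_set X -> finite_set Y -> finite_set (fun x => X x \/ Y x).
Proof.
  intros [l1 H1] [l2 H2]. exists (l1 ++ l2). intros x [Hx|Hx]; apply in_or_app; auto.
Qed.

Lemma finite_list_union {I T} (F : I -> T -> Prop) (l : list I) :
  (forall i, In i l -> finite_set (F i)) -> finite_set (fun x => exists i, In i l /\ F i x).
Proof.
  induction l as [|i r IH]; intro Hfin.
  - exists nil. intros x [i [[] _]].
  - apply (finite_subset _ (fun x => F i x \/ exists j, In j r /\ F j x)).
    + intros x [j [[<-|Hj] Fx]]; [left | right; exists j]; auto.
    + apply finite_union; [apply Hfin; left; auto | apply IH; intros j Hj; apply Hfin; right; auto].
Qed.

Lemma injective_seq_avoids_list {T} (h : nat -> T) :
  (forall n m, h n = h m -> n = m) -> forall l, exists n, ~ In (h n) l.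
Proof.
  intros Hi l. apply NNPP; intro N.
  assert (Hincl : incl (map h (seq 0 (S (length l)))) l).
  { intros y Hy. apply in_map_iff in Hy. destruct Hy as [n [<- _]]. apply NNPP; intro N2; apply N; eauto. }
  apply NoDup_incl_length in Hincl;
    [| apply Injective_map_NoDup; [intros a b; apply Hi | apply seq_NoDup]].
  rewrite length_map, length_seq in Hincl. lia.
Qed.

(* Bolzano-Weierstrass on R: a bounded infinite set has an accumulation point
   (the supremum of the z such that infinitely many members lie above z). *)
Lemma bounded_infinite_limit_point (Y : R -> Prop) :
  ~ finite_set Y -> (exists M, forall y, Y y -> Rabs y <= M) ->
  exists l, forall eps, 0 < eps -> exists y, Y y /\ y <> l /\ Rabs (y - l) < eps.
Proof.
  intros Hinf [M HM].
  set (E := fun z => ~ finite_set (fun y => Y y /\ z <= y)).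
  assert (HE : E (- M)).
  { intro F. apply Hinf. revert F. apply finite_subset. intros y Hy; split; auto.
    apply (proj1 (Rabs_le_between _ _) (HM y Hy)). }
  assert (HB : bound E).
  { exists M. intros z Hz. destruct (Rle_or_lt z M) as [h|h]; auto. exfalso. apply Hz.
    exists nil. intros y [Hy Hzy]. pose proof (proj1 (Rabs_le_between _ _) (HM y Hy)). lra. }
  destruct (completeness E HB (ex_intro _ _ HE)) as [l [Hub Hlub]].
  exists l. intros eps Heps.
  assert (Hz : exists z, E z /\ l - eps / 2 < z).
  { apply NNPP; intro N. assert (l <= l - eps / 2); [|lra]. apply Hlub. intros z Ez.
    destruct (Rle_or_lt z (l - eps / 2)) as [h|h]; auto. exfalso; apply N; eauto. }
  destruct Hz as [z [Ez Hz]].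
  assert (Hbelow : ~ finite_set (fun y => Y y /\ l - eps / 2 <= y)).
  { intro F. apply Ez. revert F. apply finite_subset. intros y [Hy h]; split; auto; lra. }
  assert (Habove : finite_set (fun y => Y y /\ l + eps / 2 <= y)).
  { apply NNPP; intro N. assert (l + eps / 2 <= l) by (apply Hub; exact N). lra. }
  destruct Habove as [l2 Hl2].
  destruct (infinite_avoids_list _ Hbelow (l :: l2)) as [y [[Hy h1] Hn]].
  exists y. split; [exact Hy|]. split.
  - intro e; apply Hn; left; auto.
  - destruct (Rle_or_lt (l + eps / 2) y) as [h|h].
    + exfalso; apply Hn; right; apply Hl2; auto.
    + apply Rabs_def1; lra.
Qed.

(* Compactness of T: every infinite subset of T has an accumulation point,
   either the image of an accumulation point in R or the south pole. *)
Lemma circle_infinite_limit_point (X : circle -> Prop) : ~ finite_set X ->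
  exists c, forall eps, 0 < eps -> exists x, X x /\ x <> c /\ cdist c x < eps.
Proof.
  intros Hinf. set (Y := fun t => X (stereo t)).
  assert (HY : ~ finite_set Y).
  { intros [lt Hlt]. apply Hinf. exists (south :: map stereo lt). intros x Hx.
    destruct (classic (x = south)) as [e|e]; [left; auto|].
    right. rewrite (stereo_surjective x e). apply in_map, Hlt.
    unfold Y. rewrite <- (stereo_surjective x e). exact Hx. }
  destruct (classic (exists M, forall y, Y y -> Rabs y <= M)) as [Hb|Hnb].
  - destruct (bounded_infinite_limit_point Y HY Hb) as [l Hl]. exists (stereo l). intros eps Heps.
    destruct (Hl (eps / 2)) as [y [Hy [Hne Hd]]]; [lra|].
    exists (stereo y). split; [exact Hy|]. split.
    + intro E; apply Hne, stereo_injective, E.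
    + eapply Rle_lt_trans; [apply cdist_stereo|]. rewrite Rabs_minus_sym. lra.
  - exists south. intros eps Heps.
    assert (Hy : exists y, Y y /\ 2 / eps < Rabs y).
    { apply NNPP; intro N. apply Hnb. exists (2 / eps). intros y Hy.
      destruct (Rle_or_lt (Rabs y) (2 / eps)); auto. exfalso; apply N; eauto. }
    destruct Hy as [y [Hy Hr]]. exists (stereo y). split; [exact Hy|]. split.
    + apply stereo_ne_south.
    + apply cdist_south_stereo; auto.
Qed.

(* The ternary number 0.s_0 s_1 s_2 ... (base 3) with digits s_n in {0,1}. *)
Definition bit (b : bool) : R := if b then 1 else 0.

Definition ternary_term (s : nat -> bool) (n : nat) : R := bit (s n) * (/3) ^ n.

Definition ternary (s : nat -> bool) : R := /3 * Series (ternary_term s).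

Lemma ternary_term_bounds s n : 0 <= ternary_term s n <= (/3) ^ n.
Proof.
  unfold ternary_term. pose proof (pow_le (/3) n ltac:(lra)).
  destruct (s n); simpl; lra.
Qed.

Lemma geometric_third : is_series (fun n => (/3) ^ n) (3 / 2).
Proof.
  replace (3 / 2) with (/ (1 - /3)) by field.
  apply is_series_geom. rewrite Rabs_right; lra.
Qed.

Lemma ex_ternary_series s : ex_series (ternary_term s).
Proof.
  apply (@ex_series_le R_AbsRing R_CompleteNormedModule _ (fun n => (/3) ^ n)).
  - intro n. unfold norm; simpl. unfold abs; simpl. pose proof (ternary_term_bounds s n).
    rewrite Rabs_right; lra.
  - eexists; apply geometric_third.
Qed.

Lemma ternary_bounds s : 0 <= ternary s <= /2.
Proof.
  unfold ternary. split.
  - apply Rmult_le_pos; [lra|].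
    replace 0 with (Series (fun n => 0 * ternary_term s n)) by (rewrite Series_scal_l; ring).
    apply Series_le; [intro n; pose proof (ternary_term_bounds s n); lra | apply ex_ternary_series].
  - assert (Series (ternary_term s) <= 3 / 2); [|lra].
    rewrite <- (is_series_unique _ _ geometric_third).
    apply Series_le; [apply ternary_term_bounds | eexists; apply geometric_third].
Qed.

Lemma ternary_unfold s : ternary s = bit (s 0%nat) / 3 + ternary (fun n => s (S n)) / 3.
Proof.
  unfold ternary. rewrite Series_incr_1 by apply ex_ternary_series.
  replace (fun k => ternary_term s (S k)) with (fun k => /3 * ternary_term (fun n => s (S n)) k).
  - rewrite Series_scal_l. unfold ternary_term at 1; simpl. field.
  - apply functional_extensionality. intro k. unfold ternary_term; simpl. ring.
Qed.

Lemma ternary_ext s s' : (forall n, s n = s' n) -> ternary s = ternary s'.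
Proof. intro H. unfold ternary. f_equal. apply Series_ext. intro n; unfold ternary_term; rewrite H; auto. Qed.

(* Digits in {0,1} make the coding injective (no carries are possible). *)
Lemma ternary_injective s s' : ternary s = ternary s' -> forall n, s n = s' n.
Proof.
  intros H n. revert s s' H. induction n as [|n IH]; intros s s' H;
    rewrite (ternary_unfold s), (ternary_unfold s') in H;
    pose proof (ternary_bounds (fun n => s (S n))); pose proof (ternary_bounds (fun n => s' (S n))).
  - destruct (s 0%nat), (s' 0%nat); auto; simpl in H; exfalso; lra.
  - apply (IH (fun n => s (S n)) (fun n => s' (S n))).
    destruct (s 0%nat), (s' 0%nat); simpl in H; lra.
Qed.

Lemma ternary_shift M s :
  exists z : Z, 3 ^ M * ternary s = IZR z + ternary (fun n => s (n + M)%nat).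
Proof.
  revert s. induction M as [|M IH]; intro s.
  - exists 0%Z. rewrite (ternary_ext s (fun n => s (n + 0)%nat)) by (intro; f_equal; lia). simpl; ring.
  - destruct (IH s) as [z Hz]. exists (3 * z + (if s M then 1 else 0))%Z.
    replace (3 ^ S M * ternary s) with (3 * (3 ^ M * ternary s)) by (simpl; ring). rewrite Hz.
    rewrite plus_IZR, mult_IZR, (ternary_unfold (fun n => s (n + M)%nat)); simpl.
    rewrite (ternary_ext (fun n => s (S (n + M))) (fun n => s (n + S M)%nat)) by (intro; f_equal; lia).
    destruct (s M); simpl; field.
Qed.

Lemma ternary_tail_equal s s' N N' (k k' : Z) :
  IZR k / 3 ^ N + ternary s = IZR k' / 3 ^ N' + ternary s' ->
  forall n, (N + N' <= n)%nat -> s n = s' n.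
Proof.
  intros Hx n Hn. set (M := (N + N')%nat) in *.
  assert (HA : 0 < 3 ^ N) by (apply pow_lt; lra). assert (HB : 0 < 3 ^ N') by (apply pow_lt; lra).
  assert (E : IZR k * 3 ^ N' + 3 ^ M * ternary s = IZR k' * 3 ^ N + 3 ^ M * ternary s').
  { apply (f_equal (fun z => z * (3 ^ N * 3 ^ N'))) in Hx. unfold M; rewrite pow_add.
    field_simplify in Hx; [|lra..]. lra. }
  destruct (ternary_shift M s) as [z Hz]. destruct (ternary_shift M s') as [z' Hz'].
  rewrite Hz, Hz', !pow_IZR in E.
  set (W := (k' * 3 ^ Z.of_nat N + z' - k * 3 ^ Z.of_nat N' - z)%Z).
  set (t := fun n => s (n + M)%nat). set (t' := fun n => s' (n + M)%nat).
  assert (EW : ternary t - ternary t' = IZR W)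
    by (unfold W, t, t'; rewrite !minus_IZR, !plus_IZR, !mult_IZR; lra).
  assert (W = 0%Z).
  { pose proof (ternary_bounds t); pose proof (ternary_bounds t').
    assert (Hlo : -1 < IZR W) by lra. assert (Hhi : IZR W < 1) by lra.
    apply lt_IZR in Hlo; apply lt_IZR in Hhi. lia. }
  replace n with ((n - M) + M)%nat by lia.
  apply (ternary_injective t t'). rewrite H in EW; simpl in EW. lra.
Qed.

(* A surjective enumeration of the tests "m/(k+1) < u" (side true) and
   "m/(k+1) < v" (side false), and a schedule visiting each test infinitely often. *)
Definition rational_test (i : nat) : bool * Z * nat :=
  let (p, k) := Cantor.of_nat i in let (q, r) := Cantor.of_nat p in
  let (s, t) := Cantor.of_nat q in (Nat.eqb s 0, (Z.of_nat r - Z.of_nat t)%Z, k).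

Lemma rational_test_surjective v : exists i, rational_test i = v.
Proof.
  destruct v as [[side m] k].
  exists (Cantor.to_nat (Cantor.to_nat (Cantor.to_nat ((if side then 0 else 1)%nat, Z.to_nat (- m)),
                                          Z.to_nat m), k)).
  unfold rational_test. rewrite !Cantor.cancel_of_to. f_equal. f_equal.
  - destruct side; reflexivity.
  - lia.
Qed.

Definition schedule (n : nat) : bool * Z * nat := rational_test (fst (Cantor.of_nat n)).

Lemma schedule_recurrent v M : exists n, (M <= n)%nat /\ schedule n = v.
Proof.
  destruct (rational_test_surjective v) as [i Hi]. exists (Cantor.to_nat (i, M)). split.
  - pose proof (Cantor.to_nat_non_decreasing i M). lia.
  - unfold schedule. rewrite Cantor.cancel_of_to. exact Hi.
Qed.

Definition pair_bits (u v : R) (n : nat) : bool :=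
  let '(side, m, k) := schedule n in
  if Rlt_dec (IZR m / INR (S k)) (if side then u else v) then true else false.

Lemma rationals_dense u v : u < v -> exists m k, u < IZR m / INR (S k) < v.
Proof.
  intro H. destruct (archimed_cor1 (v - u)) as [N [HN HN0]]; [lra|].
  destruct N as [|k]; [lia|]. exists (up (u * INR (S k))), k.
  destruct (archimed (u * INR (S k))) as [h1 h2].
  assert (0 < INR (S k)) by (apply lt_0_INR; lia).
  apply (Rmult_lt_compat_r (INR (S k))) in HN; auto. rewrite Rinv_l in HN by lra.
  split; apply (Rmult_lt_reg_r (INR (S k))); auto; unfold Rdiv; rewrite Rmult_assoc, Rinv_l by lra; lra.
Qed.

Lemma pair_bits_tail_determines u v u' v' M :
  (forall n, (M <= n)%nat -> pair_bits u v n = pair_bits u' v' n) -> u = u' /\ v = v'.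
Proof.
  intro H.
  assert (Hside : forall side : bool, (if side then u else v) = (if side then u' else v')).
  { intro side. set (x := if side then u else v). set (x' := if side then u' else v').
    assert (K : forall m k, IZR m / INR (S k) < x <-> IZR m / INR (S k) < x').
    { intros m k. destruct (schedule_recurrent (side, m, k) M) as [n [Hn Hs]].
      specialize (H n Hn). unfold pair_bits in H. rewrite Hs in H. fold x x' in H.
      destruct (Rlt_dec (IZR m / INR (S k)) x), (Rlt_dec (IZR m / INR (S k)) x');
        try discriminate; tauto. }
    destruct (Rtotal_order x x') as [h|[h|h]]; auto;
      destruct (rationals_dense _ _ h) as [m [k [h1 h2]]]; apply K in h2; lra. }
  exact (conj (Hside true) (Hside false)).
Qed.

Section Cosets.

Variables (L : Type) (f : L -> R).
Hypothesis f_injective : forall a b, f a = f b -> a = b.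

Definition coset_set (a b : L) (x : circle) : Prop :=
  exists (k : Z) (N : nat), x = stereo (IZR k / 3 ^ N + ternary (pair_bits (f a) (f b))).

Lemma coset_sets_disjoint a b a' b' x :
  coset_set a b x -> coset_set a' b' x -> a = a' /\ b = b'.
Proof.
  intros [k [N Hx]] [k' [N' Hx']]. rewrite Hx in Hx'. apply stereo_injective in Hx'.
  destruct (pair_bits_tail_determines _ _ _ _ _ (ternary_tail_equal _ _ _ _ _ _ Hx')) as [e1 e2].
  split; apply f_injective; auto.
Qed.

(* Each D_ab is dense in T, since Z[1/3] + psi(a,b) is dense in R. *)
Lemma coset_set_dense a b x eps : 0 < eps -> exists u, coset_set a b u /\ cdist x u < eps.
Proof.
  intro He. set (ps := ternary (pair_bits (f a) (f b))).
  destruct (classic (x = south)) as [->|Hx].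
  - destruct (archimed (2 / eps - ps)) as [h1 h2].
    assert (0 < 2 / eps) by (apply Rdiv_lt_0_compat; lra).
    exists (stereo (IZR (up (2 / eps - ps)) / 3 ^ 0 + ps)). split.
    + exists (up (2 / eps - ps)), 0%nat; auto.
    + apply cdist_south_stereo; auto. simpl. rewrite Rabs_right; lra.
  - rewrite (stereo_surjective x Hx). set (t0 := stereo_coord x).
    destruct (pow_lt_1_zero (/3) ltac:(rewrite Rabs_right; lra) (eps / 2) ltac:(lra)) as [N HN].
    specialize (HN N (le_n N)). rewrite pow_inv in HN.
    assert (H3 : 0 < 3 ^ N) by (apply pow_lt; lra).
    rewrite Rabs_right in HN by (apply Rle_ge, Rlt_le, Rinv_0_lt_compat; auto).
    set (r := (t0 - ps) * 3 ^ N). destruct (archimed r) as [h1 h2].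
    set (k := (up r - 1)%Z).
    exists (stereo (IZR k / 3 ^ N + ps)). split; [exists k, N; auto|].
    eapply Rle_lt_trans; [apply cdist_stereo|].
    assert (Hk : IZR k <= r < IZR k + 1) by (unfold k; rewrite minus_IZR; simpl; lra).
    assert (E : (t0 - (IZR k / 3 ^ N + ps)) * 3 ^ N = r - IZR k) by (unfold r; field; lra).
    assert (Rabs (t0 - (IZR k / 3 ^ N + ps)) < / 3 ^ N); [|lra].
    apply Rabs_def1; apply (Rmult_lt_reg_r (3 ^ N)); auto; rewrite E.
    + rewrite Rinv_l by lra. lra.
    + replace (- / 3 ^ N * 3 ^ N) with (-1) by (field; lra). lra.
Qed.

Lemma coset_set_infinite a b : ~ finite_set (coset_set a b).
Proof.
  intros [l Hl].
  destruct (injective_seq_avoids_list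
              (fun n => stereo (IZR (Z.of_nat n) / 3 ^ 0 + ternary (pair_bits (f a) (f b))))) with (l := l)
    as [n Hn].
  - intros n m E. apply stereo_injective in E. simpl in E. rewrite <- !INR_IZR_INZ in E.
    apply INR_eq. lra.
  - apply Hn, Hl. exists (Z.of_nat n), 0%nat. reflexivity.
Qed.

End Cosets.

Section BrandtTopology.

Context {L : Type}.

Definition copy (a b : L) (q : Brandt L) : Prop :=
  match q with Bzero => False | Btrip a' _ b' => a' = a /\ b' = b end.

Lemma copy_open a b : tauB_open (copy a b).
Proof.
  intros [|a' x b'] Hq; [contradiction|].
  exists (fun _ => True). split; [exists 1; split; [lra | auto] | auto].
Qed.

Definition off_level (c : circle) (q : Brandt L) : Prop :=
  match q with Bzero => True | Btrip _ x _ => x <> c end.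

Lemma off_level_open c : tauB_open (off_level c).
Proof.
  intros [|a x b] Hq.
  - exists nil, (c :: nil). intros a x b _ Hx E. apply Hx; left; auto.
  - exists (fun v => v <> c). split; [|auto].
    exists (cdist x c). split; [apply cdist_pos; auto|]. intros u Hu E; subst; lra.
Qed.

Lemma tauB_open_inter (O O' : Brandt L -> Prop) :
  tauB_open O -> tauB_open O' -> tauB_open (fun q => O q /\ O' q).
Proof.
  intros HO HO' [|a x b] [Hq Hq'].
  - destruct (HO _ Hq) as [ab [xs H]], (HO' _ Hq') as [ab' [xs' H']].
    exists (ab ++ ab'), (xs ++ xs'). intros a x b Hab Hx.
    split; [apply H | apply H']; intro I; [apply Hab | apply Hx | apply Hab | apply Hx];
      apply in_or_app; auto.
  - destruct (HO _ Hq) as [U [[e [He HU]] HUO]], (HO' _ Hq') as [U' [[e' [He' HU']] HUO']].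
    exists (fun u => U u /\ U' u). split.
    + exists (Rmin e e'). split; [apply Rmin_pos; auto|].
      intros u Hu. split; [apply HU | apply HU']; eapply Rlt_le_trans; eauto;
        [apply Rmin_l | apply Rmin_r].
    + intros u [Hu Hu']. split; auto.
Qed.

Lemma dense_meets_copy (A : Brandt L -> Prop) :
  dense tauB_open A -> forall a b, exists x, A (Btrip a x b).
Proof.
  intros Hd a b. destruct (Hd (copy a b) (copy_open a b)) as [q [Aq Cq]].
  - exists (Btrip a south b). simpl; auto.
  - destruct q as [|a' x b']; [contradiction|]. destruct Cq; subst. eauto.
Qed.

(* A set of diagonal points (a,c,a) on a single level has no accumulation
   point: 0 is separated by the complement of the level, and a point of a
   copy sees at most one of them. *)
Lemma diagonal_level_no_accumulation (S : Brandt L -> Prop) (c : circle) :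
  (forall q, S q -> exists a, q = Btrip a c a) -> forall p, ~ accumulation_point tauB_open S p.
Proof.
  intros HS [|a1 y b1] Hp.
  - destruct (Hp _ (off_level_open c) I) as [q [Sq [_ Oq]]].
    destruct (HS q Sq) as [a ->]. apply Oq; auto.
  - destruct (classic (y = c)) as [->|Hy].
    + destruct (Hp _ (copy_open a1 b1) (conj eq_refl eq_refl)) as [q [Sq [Hne Cq]]].
      destruct (HS _ Sq) as [a ->]. destruct Cq; subst. contradiction.
    + destruct (Hp _ (tauB_open_inter _ _ (copy_open a1 b1) (off_level_open c))
                  (conj (conj eq_refl eq_refl) Hy)) as [q [Sq [_ [_ Oq]]]].
      destruct (HS q Sq) as [a ->]. apply Oq; auto.
Qed.

Lemma copy_accumulation (S : Brandt L -> Prop) a b :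
  ~ finite_set (fun x => S (Btrip a x b)) -> exists p, accumulation_point tauB_open S p.
Proof.
  intro Hinf. destruct (circle_infinite_limit_point _ Hinf) as [c Hc].
  exists (Btrip a c b). intros O HO Hp. destruct (HO _ Hp) as [U [[eps [He HU]] HUO]].
  destruct (Hc eps He) as [x [Sx [Hxc Hd]]]. exists (Btrip a x b). split; [exact Sx|]. split.
  - intro E; injection E; auto.
  - apply HUO, HU; auto.
Qed.

Lemma finite_copy_part (S : Brandt L -> Prop) a b :
  finite_set (fun x => S (Btrip a x b)) -> finite_set (fun q => S q /\ copy a b q).
Proof.
  intros [l Hl]. exists (map (fun x => Btrip a x b) l).
  intros [|a' x b'] [Sq Cq]; [contradiction|]. destruct Cq; subst.
  apply (in_map (fun x => Btrip a x b)), Hl, Sq.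
Qed.

(* An infinite set avoiding 0 that meets every copy and every level finitely
   has 0 as accumulation point: a basic neighbourhood of 0 excludes finitely many copies
   and levels, which contain only finitely many points of S. *)
Lemma zero_accumulation (S : Brandt L -> Prop) :
  ~ S Bzero -> ~ finite_set S ->
  (forall a b, finite_set (fun x => S (Btrip a x b))) ->
  (forall x, finite_set (fun q => S q /\ exists a b, q = Btrip a x b)) ->
  accumulation_point tauB_open S Bzero.
Proof.
  intros S0 Hinf Hcopy Hlevel O HO H0. destruct (HO _ H0) as [ab [xs H]].
  set (excluded := fun q => (exists i, In i ab /\ (S q /\ copy (fst i) (snd i) q))
                          \/ (exists x, In x xs /\ (S q /\ exists a b, q = Btrip a x b))).
  assert (Hfin : finite_set excluded).
  { apply finite_union; apply finite_list_union; intros i _;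
      [apply finite_copy_part, Hcopy | apply Hlevel]. }
  destruct Hfin as [l Hl]. destruct (infinite_avoids_list S Hinf l) as [[|a x b] [Sq Hq]];
    [contradiction|].
  exists (Btrip a x b). split; [exact Sq|]. split; [discriminate|].
  apply H; intro I; apply Hq, Hl.
  - left. exists (a, b). repeat split; auto.
  - right. exists x. split; [|split]; eauto.
Qed.

End BrandtTopology.

Section FromInjection.

Variables (L : Type) (f : L -> R).
Hypothesis f_injective : forall a b, f a = f b -> a = b.

Definition coset_union (q : Brandt L) : Prop :=
  match q with Bzero => False | Btrip a x b => coset_set L f a b x end.

(* A is dense: near 0 use a fresh diagonal copy (lambda is infinite) and a
   point of D_aa off the finitely many excluded levels. *)
Lemma coset_union_dense : infinite_type L -> dense tauB_open coset_union.
Proof.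
  intros HL O HO [[|a x b] Hp].
  - destruct (HO _ Hp) as [ab [xs H]].
    destruct (infinite_avoids_list (fun _ : L => True) HL (map fst ab)) as [a [_ Ha]].
    destruct (infinite_avoids_list _ (coset_set_infinite L f a a) xs) as [u [Du Hu]].
    exists (Btrip a u a). split; [exact Du|]. apply H; auto.
    intro I. apply Ha, (in_map fst _ _ I).
  - destruct (HO _ Hp) as [U [[eps [He HU]] HUO]].
    destruct (coset_set_dense L f a b x eps He) as [u [Du Hu]].
    exists (Btrip a u b). split; [exact Du|]. apply HUO, HU; auto.
Qed.

(* By disjointness of the D_ab, a level meets A in a single copy. *)
Lemma coset_union_level_finite (S : Brandt L -> Prop) :
  (forall q, S q -> coset_union q) ->
  (forall a b, finite_set (fun x => S (Btrip a x b))) ->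
  forall x, finite_set (fun q => S q /\ exists a b, q = Btrip a x b).
Proof.
  intros HSA Hcopy x.
  destruct (classic (exists a b, coset_set L f a b x)) as [[a0 [b0 D0]]|ND].
  - apply (finite_subset _ (fun q => S q /\ copy a0 b0 q)); [|apply finite_copy_part, Hcopy].
    intros q [Sq [a [b ->]]]. split; [exact Sq|].
    destruct (coset_sets_disjoint L f f_injective _ _ _ _ _ D0 (HSA _ Sq)). simpl; auto.
  - exists nil. intros q [Sq [a [b ->]]]. apply ND. exists a, b. exact (HSA _ Sq).
Qed.

Lemma coset_union_accumulation (S : Brandt L -> Prop) :
  (forall q, S q -> coset_union q) -> ~ finite_set S -> exists p, accumulation_point tauB_open S p.
Proof.
  intros HSA Hinf.
  destruct (classic (exists a b, ~ finite_set (fun x => S (Btrip a x b)))) as [[a [b Hab]]|Hall].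
  - exact (copy_accumulation S a b Hab).
  - assert (Hcopy : forall a b, finite_set (fun x => S (Btrip a x b)))
      by (intros a b; apply NNPP; intro N; apply Hall; eauto).
    exists Bzero. apply zero_accumulation; auto.
    + exact (HSA Bzero).
    + apply coset_union_level_finite; auto.
Qed.

End FromInjection.

Lemma pracompact_of_injection (L : Type) (f : L -> R) :
  infinite_type L -> (forall a b, f a = f b -> a = b) -> countably_pracompact (@tauB_open L).
Proof.
  intros HL Hf. exists (coset_union L f). split.
  - apply coset_union_dense, HL.
  - apply coset_union_accumulation, Hf.
Qed.

Definition circle_code (c : circle) : R :=
  let (x, y) := proj1_sig c in if Rle_dec 0 y then (x + 1) / 4 else (x + 1) / 4 + / 2.

Lemma circle_code_range c : 0 <= circle_code c < 1.
Proof.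
  destruct c as [[x y] h]; unfold circle_code; simpl in *.
  destruct (Rle_dec 0 y); split; nra.
Qed.

Lemma circle_code_injective c c' : circle_code c = circle_code c' -> c = c'.
Proof.
  destruct c as [[x y] h], c' as [[x' y'] h']; unfold circle_code; simpl in *; intro E.
  assert (Hx : -1 <= x <= 1) by nra. assert (Hx' : -1 <= x' <= 1) by nra.
  assert (Hsame : 0 <= y * y' -> x = x' -> (x, y) = (x', y')).
  { intros Hs <-. f_equal.
    assert (Hfac : (y - y') * (y + y') = 0) by nra.
    destruct (Rmult_integral _ _ Hfac); [lra|]. assert (y' = - y) by lra. subst. nra. }
  apply circle_eq; simpl.
  destruct (Rle_dec 0 y), (Rle_dec 0 y'); apply Hsame; nra.
Qed.

Lemma nat_plus_fraction_injective n m g g' :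
  0 <= g < 1 -> 0 <= g' < 1 -> INR n + g = INR m + g' -> n = m.
Proof.
  intros h h' E.
  assert (Hnm : INR n < INR (S m)) by (rewrite S_INR; lra).
  assert (Hmn : INR m < INR (S n)) by (rewrite S_INR; lra).
  apply INR_lt in Hnm; apply INR_lt in Hmn. lia.
Qed.

Fixpoint position {T} (d : forall x y : T, {x = y} + {x <> y}) (l : list T) (a : T) : nat :=
  match l with nil => 0%nat | x :: r => if d x a then 0%nat else S (position d r a) end.

Lemma position_spec {T} d (l : list T) a : In a l -> nth_error l (position d l a) = Some a.
Proof.
  induction l as [|x r IH]; simpl; [intros []|]. intros [E|I]; destruct (d x a); subst; auto.
  congruence.
Qed.

(* A map into T with finite fibres yields an injection into R, via
   a |-> (position of a in its fibre) + circle_code (g a). *)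
Lemma injection_of_finite_fibers {L} (g : L -> circle) :
  (forall c, finite_set (fun a => g a = c)) -> card_le_continuum L.
Proof.
  intro Hfin.
  set (fiber := fun c => proj1_sig (constructive_indefinite_description _ (Hfin c))).
  assert (Hfiber : forall a, In a (fiber (g a))).
  { intro a. unfold fiber. destruct (constructive_indefinite_description _ (Hfin (g a))) as [l Hl]; auto. }
  set (d := fun x y : L => excluded_middle_informative (x = y)).
  exists (fun a => INR (position d (fiber (g a)) a) + circle_code (g a)).
  intros a b E. pose proof (circle_code_range (g a)) as Ra; pose proof (circle_code_range (g b)) as Rb.
  pose proof (nat_plus_fraction_injective _ _ _ _ Ra Rb E) as En. rewrite En in E.
  assert (Eg : g a = g b) by (apply circle_code_injective; lra).
  pose proof (position_spec d _ _ (Hfiber a)) as Pa. pose proof (position_spec d _ _ (Hfiber b)) as Pb.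
  rewrite En, Eg, Pb in Pa. congruence.
Qed.

(* Necessity: a dense set picks a level g a in each diagonal copy; g has finite
   fibres since an infinite fibre would be an infinite subset of the dense set
   without accumulation point. *)
Lemma continuum_bound_of_pracompact (L : Type) :
  countably_pracompact (@tauB_open L) -> card_le_continuum L.
Proof.
  intros [A [Hd Hacc]].
  assert (Hdiag : forall a, exists x, A (Btrip a x a)) by (intro a; apply dense_meets_copy, Hd).
  destruct (choice _ Hdiag) as [g Hg].
  apply (injection_of_finite_fibers g). intro c.
  destruct (classic (exists a0 : L, True)) as [[a0 _]|Hempty].
  2: { exists nil. intros a _. apply Hempty; eauto. }
  apply NNPP; intro Hinf.
  set (S := fun q : Brandt L => exists a, g a = c /\ q = Btrip a c a).
  assert (HSinf : ~ finite_set S).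
  { intros [l Hl]. apply Hinf.
    set (first := fun q : Brandt L => match q with Btrip a _ _ => a | Bzero => a0 end).
    exists (map first l). intros a Ha. apply (in_map first l (Btrip a c a)), Hl. exists a; auto. }
  assert (HSA : forall q, S q -> A q) by (intros q [a [<- ->]]; apply Hg).
  destruct (Hacc S HSA HSinf) as [p Hp].
  apply (diagonal_level_no_accumulation S c) with (p := p); [|exact Hp].
  intros q [a [_ ->]]. eauto.
Qed.

Theorem proposition2p14 (L : Type) (HL : infinite_type L) :
  countably_pracompact (@tauB_open L) <-> card_le_continuum L.
Proof.
  split.
  - apply continuum_bound_of_pracompact.
  - intros [f Hf]. exact (pracompact_of_injection L f HL Hf).
Qed.
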